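(* Let $\mathrm{M}=\langle e_1+I,\ e_2+I\rangle$ and let $$A=\begin{pmatrix}-1&0\\0&1\end{pmatrix},\quad B=\begin{pmatrix}-1&1\\0&1\end{pmatrix},\quad C=\begin{pmatrix}0&1\\1&0\end{pmatrix}.$$ Let $\kappa=(k+K)_\star$ be an element of $\mathrm{Aff}(\mathrm{M})$ such that $K$ has finite order. Then $K$ is conjugate in $\mathrm{GL}(2,\mathbb Z)$ to exactly one of $I,-I,A,C,(BC)^2,AC$ or $BC$. Moreover, with conjugacy of $\kappa$ taken in $\mathrm{Aff}(\mathrm{M})$: (1) If $K=I$ and $\kappa$ has order 2, then $\kappa\in\mathrm{K}_2$ and $\kappa$ is conjugate to $(e_1/2+I)_\star$, where $\mathrm{K}_2=\{I_\star,(e_1/2+I)_\star,(e_2/2+I)_\star,(e_1/2+e_2/2+I)_\star\}$. (2) If $K=-I$, then $\kappa$ is conjugate to $(-I)_\star$. (3) If $K$ is conjugate to $A$ and $\kappa$ has order 2, then $\kappa$ is conjugate to exactly one of $A_\star$ or $(e_2/2+A)_\star$. (4) If $K$ is conjugate to $C$ and $\kappa$ has order 2, then $\kappa$ is conjugate to $C_\star$. (5) If $K$ is conjugate to $(BC)^2$, then $\kappa$ is conjugate to $((BC)^2)_\star$. (6) If $K$ is conjugate to $AC$, then $\kappa$ is conjugate to $(AC)_\star$. (7) If $K$ is conjugate to $BC$, then $\kappa$ is conjugate to $(BC)_\star$.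
   Context: $e_1,e_2$ are the standard basis vectors of $E^2$. Affine maps of $E^2$ are written $a+A$ ($x\mapsto a+Ax$); $a+I$ is translation by $a$. The normalizer $N_A(\mathrm{M})$ of $\mathrm{M}$ in the affine group of $E^2$ consists of all $a+A$ with $a\in E^2$, $A\in\mathrm{GL}(2,\mathbb Z)$. Each $a+A\in N_A(\mathrm{M})$ induces an affinity $(a+A)_\star:\mathrm{M}x\mapsto\mathrm{M}(a+Ax)$ of the torus $E^2/\mathrm{M}$; $\mathrm{Aff}(\mathrm{M})$ is the group of all such affinities, and the linear part $K$ of $\kappa=(k+K)_\star$ is well defined. *)

From HB Require Import structures.
From mathcomp Require Import all_boot all_order all_algebra.
From mathcomp Require Import reals.
Set Implicit Arguments. Unset Strict Implicit. Unset Printing Implicit Defensive.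
Import Order.TTheory GRing.Theory Num.Theory.
Local Open Scope ring_scope.

Definition mx2 (a b c d : int) : 'M[int]_2 :=
  \matrix_(i < 2, j < 2)
    if (i : nat) == 0%N then (if (j : nat) == 0%N then a else b)
    else (if (j : nat) == 0%N then c else d).

Definition vec2 {R : realType} (x y : R) : 'cV[R]_2 :=
  \col_(i < 2) if (i : nat) == 0%N then x else y.

(* an affine map a + A : x |-> a + A x, with A an integer matrix *)
Definition affmap (R : realType) := ('cV[R]_2 * 'M[int]_2)%type.

Definition aff_apply {R : realType} (f : affmap R) (x : 'cV[R]_2) : 'cV[R]_2 :=
  f.1 + map_mx intr f.2 *m x.

Definition aff_comp {R : realType} (f g : affmap R) : affmap R :=
  (f.1 + map_mx intr f.2 *m g.1, f.2 *m g.2).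

Definition aff_id {R : realType} : affmap R := (0, 1%:M).

Definition aff_pow {R : realType} (f : affmap R) (n : nat) : affmap R :=
  iter n (aff_comp f) aff_id.

(* a + A is in N_A(M): A in GL(2,Z) *)
Definition in_normalizer {R : realType} (f : affmap R) : Prop := f.2 \in unitmx.

Definition in_lattice {R : realType} (v : 'cV[R]_2) : Prop :=
  forall i : 'I_2, v i 0 \is a Num.int.

(* f_* = g_* as maps of the torus E^2/M : M(f x) = M(g x) for all x *)
Definition same_affinity {R : realType} (f g : affmap R) : Prop :=
  forall x, in_lattice (aff_apply f x - aff_apply g x).

Definition aff_order2 {R : realType} (f : affmap R) : Prop :=
  same_affinity (aff_pow f 2) aff_id /\ ~ same_affinity f aff_id.

(* f_* and g_* are conjugate in Aff(M): h_* f_* h_*^{-1} = g_* for some h in N_A(M) *)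
Definition aff_conj {R : realType} (f g : affmap R) : Prop :=
  exists h : affmap R, in_normalizer h /\
    same_affinity (aff_comp h f) (aff_comp g h).

Definition gl_conj (K L : 'M[int]_2) : Prop :=
  exists P : 'M[int]_2, P \in unitmx /\ P *m K *m invmx P = L.

Definition matA : 'M[int]_2 := mx2 (-1) 0 0 1.
Definition matB : 'M[int]_2 := mx2 (-1) 1 0 1.
Definition matC : 'M[int]_2 := mx2 0 1 1 0.
Definition matI : 'M[int]_2 := 1%:M.

Definition reps (i : 'I_7) : 'M[int]_2 :=
  match (i : nat) with
  | 0%N => matI
  | 1%N => - matI
  | 2%N => matA
  | 3%N => matC
  | 4%N => (matB *m matC) *m (matB *m matC)
  | 5%N => matA *m matC
  | _ => matB *m matC
  end.

Definition e1 {R : realType} : 'cV[R]_2 := vec2 1 0.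
Definition e2 {R : realType} : 'cV[R]_2 := vec2 0 1.

From HB Require Import structures.
From mathcomp Require Import all_boot all_order all_algebra.
From mathcomp Require Import reals.
From mathcomp Require Import zify ring.
Set Implicit Arguments. Unset Strict Implicit. Unset Printing Implicit Defensive.
Import Order.TTheory GRing.Theory Num.Theory.
Local Open Scope ring_scope.

(* If tr K > max(0, det K), Cayley-Hamilton writes the powers of K as
   p K - (det K) q I with 1 <= p nondecreasing, so K^n = I forces K = I.  Applied to
   K and -K, this leaves for a finite-order K in GL(2,Z) other than I and -I only
   det K = 1 with |tr K| <= 1, or det K = -1 with tr K = 0.  Then a Euclidean
   descent on the lower-left entry c conjugates K to an upper triangular or a
   companion matrix, each conjugate to a representative: once the upper-left entry
   is reduced modulo c, these bounds on det and tr force |b| < |c| for the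
   upper-right entry b.  Determinant and trace
   separate the representatives except A and C, which are not conjugate since
   2pq = +-1 has no integer solution.

   Conjugating (k + K)_* by (h + P)_*, where P K P^-1 = G, gives (v + G)_* exactly
   when v = P k + (I - G) h modulo Z^2.  If det (I - G) <> 0, h can be chosen to
   make v = 0.  Otherwise the order-2 condition P k + G P k in Z^2 leaves only the
   half-lattice vectors, and for G = A the second coordinate of v modulo Z is an
   invariant, since that of (I - A) h vanishes. *)

Section UnitSimilar.
Variables (R : comUnitRingType) (n : nat).
Implicit Types K L M : 'M[R]_n.

Definition unit_similar K L := exists2 P : 'M[R]_n, P \in unitmx & P *m K = L *m P.

Lemma unit_similar_refl K : unit_similar K K.
Proof. by exists 1%:M; rewrite ?unitmx1 ?mul1mx ?mulmx1. Qed.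

Lemma unit_similar_sym K L : unit_similar K L -> unit_similar L K.
Proof.
move=> [P uP PK]; exists (invmx P); first by rewrite unitmx_inv.
by apply: (canRL (mulmxK uP)); rewrite -mulmxA -PK mulmxA mulVmx ?mul1mx.
Qed.

Lemma unit_similar_trans K L M : unit_similar K L -> unit_similar L M -> unit_similar K M.
Proof.
move=> [P uP PK] [Q uQ QL]; exists (Q *m P); first by rewrite unitmx_mul uQ uP.
by rewrite -mulmxA PK !mulmxA QL.
Qed.

Lemma det_unit_similar K L : unit_similar K L -> \det K = \det L.
Proof.
move=> [P uP PK]; rewrite unitmxE in uP.
by apply: (mulrI uP); rewrite -det_mulmx PK det_mulmx mulrC.
Qed.

Lemma trace_unit_similar K L : unit_similar K L -> \tr K = \tr L.
Proof.
move=> [P uP PK]; have -> : L = P *m K *m invmx P by rewrite PK mulmxK.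
by rewrite mxtrace_mulC mulmxA mulVmx ?mul1mx.
Qed.

End UnitSimilar.

Lemma gl_conj_similar (K L : 'M[int]_2) : gl_conj K L <-> unit_similar K L.
Proof.
split=> [[P [uP <-]]|[P uP PK]]; exists P => //; first by rewrite mulmxKV.
by rewrite PK mulmxK.
Qed.

Lemma mx2E a b c d (i j : 'I_2) : mx2 a b c d i j =
  if (i : nat) == 0%N then (if (j : nat) == 0%N then a else b)
  else (if (j : nat) == 0%N then c else d).
Proof. by rewrite mxE. Qed.

Lemma mx2_ind (P : 'M[int]_2 -> Prop) :
  (forall a b c d, P (mx2 a b c d)) -> forall M, P M.
Proof.
move=> PM M; suff -> : M = mx2 (M 0 0) (M 0 1) (M 1 0) (M 1 1) by [].
apply/matrixP => i j; rewrite mx2E.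
by case: i => [[|[|//]] ?]; case: j => [[|[|//]] ?]; congr (M _ _); apply: val_inj.
Qed.

Lemma mx2_inj a b c d a' b' c' d' : mx2 a b c d = mx2 a' b' c' d' ->
  [/\ a = a', b = b', c = c' & d = d'].
Proof.
move=> E; have F (i j : 'I_2) : mx2 a b c d i j = mx2 a' b' c' d' i j by rewrite E.
by move: (F 0 0) (F 0 1) (F 1 0) (F 1 1); rewrite !mx2E.
Qed.

Lemma mulmx2 a b c d a' b' c' d' : mx2 a b c d *m mx2 a' b' c' d' =
  mx2 (a * a' + b * c') (a * b' + b * d') (c * a' + d * c') (c * b' + d * d').
Proof.
apply/matrixP => i j; rewrite !mxE !big_ord_recl big_ord0 !mxE /= addr0.
by case: i => [[|[|//]] ?]; case: j => [[|[|//]] ?].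
Qed.

Lemma mx2_1 : 1%:M = mx2 1 0 0 1.
Proof. by apply/matrixP => i j; rewrite !mxE; case: i => [[|[|//]] ?]; case: j => [[|[|//]] ?]. Qed.

Lemma oppmx2 a b c d : - mx2 a b c d = mx2 (- a) (- b) (- c) (- d).
Proof. by apply/matrixP => i j; rewrite !mxE; case: ifP => _; case: ifP. Qed.

Lemma addmx2 a b c d a' b' c' d' :
  mx2 a b c d + mx2 a' b' c' d' = mx2 (a + a') (b + b') (c + c') (d + d').
Proof. by apply/matrixP => i j; rewrite !mxE; case: ifP => _; case: ifP. Qed.

Lemma det_mx2 a b c d : \det (mx2 a b c d) = a * d - b * c.
Proof.
rewrite (expand_det_row _ 0) !big_ord_recl big_ord0 /cofactor !det_mx11 !mxE /=.
by rewrite /bump /=; ring.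
Qed.

Lemma trace_mx2 a b c d : \tr (mx2 a b c d) = a + d.
Proof. by rewrite /mxtrace !big_ord_recl big_ord0 !mxE /= addr0. Qed.

Lemma unitmx2 a b c d : (mx2 a b c d \in unitmx) = (a * d - b * c == 1) || (a * d - b * c == -1).
Proof. by rewrite unitmxE det_mx2. Qed.

Lemma det_1_sub_mx2 (M : 'M[int]_2) : \det (1%:M - M) = 1 - \tr M + \det M.
Proof.
elim/mx2_ind: M => a b c d.
by rewrite mx2_1 oppmx2 addmx2 !det_mx2 trace_mx2; ring.
Qed.

Lemma expr_mx2_trace_gt a b c d m : 0 < a + d -> a * d - b * c < a + d ->
  exists p q : int, [/\ 0 <= q <= p, 1 <= p &
    mx2 a b c d ^+ m.+1 = mx2 (p * a - (a * d - b * c) * q) (p * b) (p * c)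
                              (p * d - (a * d - b * c) * q)].
Proof.
move=> t_gt0 s_lt_t; elim: m => [|m [p [q [q_bnd p_ge1 Mm]]]].
  by exists 1, 0; rewrite expr1 !mul1r mulr0 !subr0.
exists (p * (a + d) - (a * d - b * c) * q), p; split; [nia | nia |].
by rewrite exprSr Mm -mulmxE mulmx2; congr mx2; ring.
Qed.

Lemma finite_order_mx2_trace_gt a b c d n : (0 < n)%N -> mx2 a b c d ^+ n = 1%:M ->
  0 < a + d -> a * d - b * c < a + d -> [/\ a = 1, b = 0, c = 0 & d = 1].
Proof.
case: n => // n _ Mn1 t_gt0 s_lt_t.
have [p [q [q_bnd p_ge1 Mn]]] := expr_mx2_trace_gt n t_gt0 s_lt_t.
move: Mn1; rewrite Mn mx2_1 => /mx2_inj [Ea Eb Ec Ed].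
have b0 : b = 0 by nia.
have c0 : c = 0 by nia.
have da : d = a by nia.
subst b c d; have : 0 < p - a * q by nia.
by split=> //; nia.
Qed.

Lemma finite_order_mx2_cases (M : 'M[int]_2) : M \in unitmx ->
  (exists2 n, (0 < n)%N & M ^+ n = 1%:M) ->
  [\/ M = 1%:M, M = - 1%:M, \det M = 1 /\ `|\tr M| <= 1 | \det M = -1 /\ \tr M = 0].
Proof.
elim/mx2_ind: M => a b c d; rewrite unitmx2 det_mx2 trace_mx2 => unitM [n n_gt0 Mn].
have [/andP[t_gt0 s_lt_t]|not_pos] := boolP ((0 < a + d) && (a * d - b * c < a + d)).
  have [-> -> -> ->] := finite_order_mx2_trace_gt n_gt0 Mn t_gt0 s_lt_t.
  by rewrite mx2_1; constructor 1.
have Nn : mx2 (- a) (- b) (- c) (- d) ^+ (n * 2) = 1%:M.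
  by rewrite -oppmx2 mulnC exprM sqrrN -exprM mulnC exprM Mn expr1n.
have n2_gt0 : (0 < n * 2)%N by rewrite muln_gt0 n_gt0.
have [/andP[t_lt0 s_lt_t]|not_neg] :=
  boolP ((0 < - a + - d) && (- a * - d - - b * - c < - a + - d)).
  have [Ea Eb Ec Ed] := finite_order_mx2_trace_gt n2_gt0 Nn t_lt0 s_lt_t.
  by constructor 2; rewrite mx2_1 oppmx2; congr mx2; lia.
have [s1|sN1] : a * d - b * c = 1 \/ a * d - b * c = -1 by lia.
  by constructor 3; lia.
by constructor 4; lia.
Qed.

Lemma unit_similar_mx2 (M N : 'M[int]_2) p q r u :
  (p * u - q * r == 1) || (p * u - q * r == -1) ->
  mx2 p q r u *m M = N *m mx2 p q r u -> unit_similar M N.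
Proof. by move=> uP PM; exists (mx2 p q r u); rewrite ?unitmx2. Qed.

Lemma exists_centered_residue (a c : int) : c != 0 -> exists x, 2 * `|a + x * c| <= `|c|.
Proof.
move=> c0; have a_eq := divz_eq a c; have r_ge0 := modz_ge0 a c0.
have r_lt := ltz_mod a c0; set q := (a %/ c)%Z in a_eq; set r := (a %% c)%Z in a_eq r_ge0 r_lt.
have [r_small|r_big] := lerP (2 * r) `|c|; first by exists (- q); lia.
by have [c_gt0|c_le0] := ltrP 0 c; [exists (- q - 1) | exists (- q + 1)]; lia.
Qed.

Lemma reduced_entry_bound (a b c d : int) : `|a * d - b * c| = 1 -> `|a + d| <= 1 ->
  2 * `|a| <= `|c| -> 2 <= `|c| -> `|b| < `|c|.
Proof.
move=> s1 t1 a_small c_ge2.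
have bc : b * c = a * ((a + d) - a) - (a * d - b * c) by ring.
have : `|b| * `|c| <= `|a| * (`|a| + 1) + 1.
  rewrite -normrM bc; apply: (le_trans (ler_normB _ _)).
  by rewrite normrM s1 lerD2r ler_wpM2l //; lia.
nia.
Qed.

Lemma unit_similar_lower_left_le1 (M : 'M[int]_2) : M \in unitmx -> `|\tr M| <= 1 ->
  exists2 N, unit_similar M N & (N 1 0 == 0) || (N 1 0 == 1).
Proof.
have [m] := ubnP (absz (M 1 0)); elim: m M => // m IH M.
elim/mx2_ind: M => a b c d; rewrite mx2E /= unitmx2 trace_mx2 => c_lt unitM trM.
have [c01|c_other] := boolP ((c == 0) || (c == 1)).
  by exists (mx2 a b c d); [exact: unit_similar_refl | rewrite mx2E].
have [cN1|cN1] := eqVneq c (-1).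
  exists (mx2 a (- b) 1 d); last by rewrite mx2E.
  by apply: (@unit_similar_mx2 _ _ 1 0 0 (-1)) => //; rewrite !mulmx2 cN1; congr mx2; ring.
have c0 : c != 0 by lia.
have [x a1_small] := exists_centered_residue a c0.
(* Conjugating by [[0, 1], [1, x]] reduces a modulo c and swaps the roles of b and c. *)
set a1 := a + x * c in a1_small; set d1 := d - x * c; set b1 := b + x * d - x * a1.
have s_eq : d1 * a1 - c * b1 = a * d - b * c by rewrite /b1 /a1 /d1; ring.
have t_eq : d1 + a1 = a + d by rewrite /a1 /d1; ring.
have b1_lt : `|b1| < `|c|.
  by apply: (@reduced_entry_bound a1 b1 c d1); rewrite ?(addrC a1) ?(mulrC a1) ?s_eq ?t_eq; lia.
have [N MN N01] : exists2 N, unit_similar (mx2 d1 c b1 a1) N & (N 1 0 == 0) || (N 1 0 == 1).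
  by apply: IH; rewrite ?mx2E ?unitmx2 ?trace_mx2 ?s_eq ?t_eq //=; lia.
exists N => //; apply: unit_similar_trans MN.
apply: (@unit_similar_mx2 _ _ 0 1 1 x); first by rewrite mul0r.
by rewrite !mulmx2; congr mx2; rewrite /b1 /a1 /d1; ring.
Qed.

Lemma unit_similar_shear a b d y : unit_similar (mx2 a b 0 d) (mx2 a (b + y * (d - a)) 0 d).
Proof.
apply: (@unit_similar_mx2 _ _ 1 y 0 1); first by rewrite mulr0 subr0.
by rewrite !mulmx2; congr mx2; ring.
Qed.

Lemma unit_similar_companion a b d : unit_similar (mx2 a b 1 d) (mx2 0 (b - a * d) 1 (a + d)).
Proof.
apply: (@unit_similar_mx2 _ _ 1 (- a) 0 1); first by rewrite mulr0 subr0.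
by rewrite !mulmx2; congr mx2; ring.
Qed.

Lemma matBC_mx2 : matB *m matC = mx2 1 (-1) 1 0.
Proof. by rewrite mulmx2. Qed.

Lemma matBC2_mx2 : (matB *m matC) *m (matB *m matC) = mx2 0 (-1) 1 (-1).
Proof. by rewrite matBC_mx2 mulmx2. Qed.

Lemma matAC_mx2 : matA *m matC = mx2 0 (-1) 1 0.
Proof. by rewrite mulmx2. Qed.

Lemma det_reps (i : 'I_7) : \det (reps i) = [:: 1; 1; -1; -1; 1; 1; 1]`_i.
Proof.
case: i => [[|[|[|[|[|[|[|//]]]]]]] ?];
  by rewrite /reps /= ?matBC2_mx2 ?matAC_mx2 ?matBC_mx2 /matI ?mx2_1 ?oppmx2 det_mx2.
Qed.

Lemma trace_reps (i : 'I_7) : \tr (reps i) = [:: 2; -2; 0; 0; -1; 0; 1]`_i.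
Proof.
case: i => [[|[|[|[|[|[|[|//]]]]]]] ?];
  by rewrite /reps /= ?matBC2_mx2 ?matAC_mx2 ?matBC_mx2 /matI ?mx2_1 ?oppmx2 trace_mx2.
Qed.

Lemma not_unit_similar_AC : ~ unit_similar matA matC.
Proof.
case=> P; elim/mx2_ind: P => p q r u; rewrite unitmx2 !mulmx2 => uP /mx2_inj [].
lia.
Qed.

Lemma unit_similar_reps_inj (i j : 'I_7) : unit_similar (reps i) (reps j) -> i = j.
Proof.
move=> sim; apply: val_inj; move: sim (det_unit_similar sim) (trace_unit_similar sim).
rewrite !det_reps !trace_reps.
case: i => [[|[|[|[|[|[|[|//]]]]]]] ?]; case: j => [[|[|[|[|[|[|[|//]]]]]]] ?] //=.
  by move/not_unit_similar_AC.
by move/unit_similar_sym/not_unit_similar_AC.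
Qed.

Lemma upper_triangular_similar_reps a b : `|a| = 1 ->
  exists i : 'I_7, unit_similar (mx2 a b 0 (- a)) (reps i).
Proof.
move=> a1; have a2 : a * a = 1 by nia.
have b_eq := divz_eq b 2; have r_ge0 := @modz_ge0 b 2 isT; have r_lt2 := @ltz_pmod b 2 isT.
set q := (b %/ 2)%Z in b_eq; set r := (b %% 2)%Z in b_eq r_ge0 r_lt2.
have shear := unit_similar_shear a b (- a) (a * q).
have r_eq : b + a * q * (- a - a) = r by nia.
rewrite r_eq in shear.
suff [i ri] : exists i : 'I_7, unit_similar (mx2 a r 0 (- a)) (reps i).
  by exists i; apply: unit_similar_trans ri.
have [->|->] : a = 1 \/ a = -1 by lia.
all: have [->|->] : r = 0 \/ r = 1 by lia.
- by exists (@Ordinal 7 2 isT); apply: (@unit_similar_mx2 _ _ 0 1 1 0); rewrite ?mulmx2.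
- by exists (@Ordinal 7 3 isT); apply: (@unit_similar_mx2 _ _ 1 0 1 1); rewrite ?mulmx2.
- by exists (@Ordinal 7 2 isT); apply: unit_similar_refl.
- by exists (@Ordinal 7 3 isT); apply: (@unit_similar_mx2 _ _ 1 0 (-1) 1); rewrite ?mulmx2.
Qed.

Lemma companion_similar_reps b t : (b = -1 /\ `|t| <= 1) \/ (b = 1 /\ t = 0) ->
  exists i : 'I_7, unit_similar (mx2 0 b 1 t) (reps i).
Proof.
case=> [[-> t_le1]|[-> ->]]; last by exists (@Ordinal 7 3 isT); apply: unit_similar_refl.
have [->|[->|->]] : t = 0 \/ t = 1 \/ t = -1 by lia.
- by exists (@Ordinal 7 5 isT); rewrite /reps /= matAC_mx2; apply: unit_similar_refl.
- exists (@Ordinal 7 6 isT); rewrite /reps /= matBC_mx2.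
  by apply: (@unit_similar_mx2 _ _ 1 1 0 1); rewrite ?mulmx2.
- by exists (@Ordinal 7 4 isT); rewrite /reps /= matBC2_mx2; apply: unit_similar_refl.
Qed.

Lemma small_trace_similar_reps (K : 'M[int]_2) :
  (\det K = 1 /\ `|\tr K| <= 1) \/ (\det K = -1 /\ \tr K = 0) ->
  exists i : 'I_7, unit_similar K (reps i).
Proof.
move=> st; have uK : K \in unitmx by rewrite unitmxE; case: st => -[-> _].
have [|N KN N01] := unit_similar_lower_left_le1 uK; first by case: st; lia.
suff [i Ni] : exists i, unit_similar N (reps i) by exists i; apply: unit_similar_trans Ni.
move: st N01; rewrite (det_unit_similar KN) (trace_unit_similar KN); elim/mx2_ind: N {KN}.
move=> a b c d; rewrite det_mx2 trace_mx2 mx2E /= => st /orP[/eqP c0|/eqP c1]; subst c.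
  have [a1 ->] : `|a| = 1 /\ d = - a by nia.
  exact: upper_triangular_similar_reps.
have [i Ci] : exists i, unit_similar (mx2 0 (b - a * d) 1 (a + d)) (reps i).
  by apply: companion_similar_reps; lia.
by exists i; apply: unit_similar_trans (unit_similar_companion a b d) Ci.
Qed.

Lemma finite_order_unique_rep (K : 'M[int]_2) : K \in unitmx ->
  (exists2 n, (0 < n)%N & K ^+ n = 1%:M) -> exists! i : 'I_7, gl_conj K (reps i).
Proof.
move=> uK finK; have [i Ki] : exists i : 'I_7, unit_similar K (reps i).
  case: (finite_order_mx2_cases uK finK) => [->|->|st|st].
  - by exists (@Ordinal 7 0 isT); apply: unit_similar_refl.
  - by exists (@Ordinal 7 1 isT); apply: unit_similar_refl.
  - by apply: small_trace_similar_reps; left.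
  - by apply: small_trace_similar_reps; right.
exists i; split=> [|j /gl_conj_similar Kj]; first exact/gl_conj_similar.
by apply: unit_similar_reps_inj; apply: unit_similar_trans (unit_similar_sym Ki) Kj.
Qed.

Section HalfIntegers.
Variable R : archiNumFieldType.
Implicit Types z : R.

Lemma half_not_int : (2%:R^-1 : R) \isn't a Num.int.
Proof.
apply/negP => /intrP [m hm].
have m_gt0 : (0 : R) < m%:~R by rewrite -hm invr_gt0 ltr0n.
have m_lt1 : (m%:~R : R) < 1 by rewrite -hm invf_lt1 ?ltr0n ?ltr1n.
rewrite ltr0z in m_gt0; rewrite ltrz1 in m_lt1; lia.
Qed.

Lemma int_or_half_int z : z + z \is a Num.int -> z \is a Num.int \/ z - 2%:R^-1 \is a Num.int.
Proof.
move/intrP => [n hn]; have n_eq := divz_eq n 2.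
have r_ge0 := @modz_ge0 n 2 isT; have r_lt2 := @ltz_pmod n 2 isT.
set q := (n %/ 2)%Z in n_eq; set r := (n %% 2)%Z in n_eq r_ge0 r_lt2.
have two0 : (2%:R : R) != 0 by rewrite pnatr_eq0.
have [r0|r1] : r = 0 \/ r = 1 by lia.
  left; apply/intrP; exists q; rewrite r0 addr0 in n_eq.
  have z_eq : z = (z + z) / 2%:R by field.
  by rewrite z_eq hn n_eq intrM mulfK.
right; apply/intrP; exists q; rewrite r1 in n_eq.
rewrite (_ : z - 2%:R^-1 = (z + z - 1) / 2%:R); last by field.
by rewrite hn n_eq intrD intrM addrK mulfK.
Qed.

Lemma int_scaled_eq0 (m : int) : (forall r : R, m%:~R * r \is a Num.int) -> m = 0.
Proof.
move=> m_int; apply/eqP/negPn/negP => m0.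
have mR : (m%:~R : R) != 0 by rewrite intr_eq0.
have := m_int (m%:~R * 2%:R)^-1; rewrite invfM mulrA mulfV // mul1r.
by rewrite (negPf half_not_int).
Qed.

End HalfIntegers.

Section Lattice.
Variable R : realType.
Implicit Types (x y : R) (v w : 'cV[R]_2).

Lemma vec2_ind (P : 'cV[R]_2 -> Prop) : (forall x y, P (vec2 x y)) -> forall v, P v.
Proof.
move=> Pv v; suff -> : v = vec2 (v 0 0) (v 1 0) by [].
apply/matrixP => i j; rewrite !mxE (ord1 j).
by case: i => [[|[|//]] ?]; congr (v _ _); apply: val_inj.
Qed.

Lemma addv2 x y x' y' : vec2 x y + vec2 x' y' = vec2 (x + x') (y + y').
Proof. by apply/matrixP => i j; rewrite !mxE; case: ifP. Qed.

Lemma oppv2 x y : - vec2 x y = vec2 (- x) (- y).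
Proof. by apply/matrixP => i j; rewrite !mxE; case: ifP. Qed.

Lemma scalev2 a x y : a *: vec2 x y = vec2 (a * x) (a * y).
Proof. by apply/matrixP => i j; rewrite !mxE; case: ifP. Qed.

Lemma subv2 x y x' y' : vec2 x y - vec2 x' y' = vec2 (x - x') (y - y').
Proof. by rewrite oppv2 addv2. Qed.

Lemma mulmx2v a b c d x y : map_mx intr (mx2 a b c d) *m vec2 x y =
  vec2 (a%:~R * x + b%:~R * y) (c%:~R * x + d%:~R * y).
Proof.
apply/matrixP => i j; rewrite !mxE !big_ord_recl big_ord0 !mxE /= addr0.
by case: i => [[|[|//]] ?].
Qed.

Lemma in_lattice_vec2 x y : in_lattice (vec2 x y) <-> x \is a Num.int /\ y \is a Num.int.
Proof.
split=> [v_int|[x_int y_int] i]; last by rewrite mxE; case: ifP.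
by move: (v_int 0) (v_int 1); rewrite !mxE.
Qed.

Lemma in_lattice0 : in_lattice (0 : 'cV[R]_2).
Proof. by move=> i; rewrite mxE. Qed.

Lemma in_latticeN v : in_lattice v -> in_lattice (- v).
Proof. by move=> v_int i; rewrite !mxE rpredN. Qed.

Lemma in_latticeB v w : in_lattice v -> in_lattice w -> in_lattice (v - w).
Proof. by move=> v_int w_int i; rewrite !mxE rpredB. Qed.

Lemma in_latticeD v w : in_lattice v -> in_lattice w -> in_lattice (v + w).
Proof. by move=> v_int w_int i; rewrite !mxE rpredD. Qed.

Lemma in_lattice_mulmx (H : 'M[int]_2) v : in_lattice v -> in_lattice (map_mx intr H *m v).
Proof.
move=> v_int i; rewrite mxE; apply: rpred_sum => j _.
by rewrite mxE rpredM ?intr_int.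
Qed.

Lemma lattice_valued_mx_eq0 (D : 'M[int]_2) :
  (forall w : 'cV[R]_2, in_lattice (map_mx intr D *m w)) -> D = 0.
Proof.
move=> D_int; apply/matrixP => i j; rewrite mxE; apply: (@int_scaled_eq0 R) => r.
by have := D_int (r *: delta_mx j 0) i; rewrite -scalemxAr -colE !mxE mulrC.
Qed.

End Lattice.

Section Affinities.
Variable R : realType.
Implicit Types (k v w : 'cV[R]_2) (f g : affmap R).

Lemma same_affinityP f g : same_affinity f g <-> f.2 = g.2 /\ in_lattice (f.1 - g.1).
Proof.
split=> [fg|[fg2 fg1] x]; last by rewrite /aff_apply fg2 opprD addrACA subrr addr0.
have fg0 := fg 0; rewrite /aff_apply !mulmx0 !addr0 in fg0; split=> //.
apply/eqP; rewrite -subr_eq0; apply/eqP/(@lattice_valued_mx_eq0 R) => w.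
have := in_latticeB (fg w) fg0; congr in_lattice.
rewrite /aff_apply map_mxB mulmxBl; apply/matrixP => i j; rewrite !mxE; ring.
Qed.

Lemma aff_conjP f g : aff_conj f g <-> exists h H, [/\ H \in unitmx, H *m f.2 = g.2 *m H &
  in_lattice (h + map_mx intr H *m f.1 - (g.1 + map_mx intr g.2 *m h))].
Proof.
split=> [[[h H] [uH /same_affinityP [] /= E L]]|[h [H [uH E L]]]]; first by exists h, H.
by exists (h, H); split=> //; apply/same_affinityP.
Qed.

Lemma aff_conj_sym f g : aff_conj f g -> aff_conj g f.
Proof.
move=> /aff_conjP [h [H [uH E L]]]; apply/aff_conjP.
exists (- (map_mx intr (invmx H) *m h)), (invmx H); split; first by rewrite unitmx_inv.
  by apply: (canRL (mulmxK uH)); rewrite -mulmxA -E mulmxA mulVmx ?mul1mx.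
have HH : map_mx intr (invmx H) *m map_mx intr H = 1%:M :> 'M[R]_2.
  by rewrite -map_mxM mulVmx ?map_mx1.
have HG : map_mx intr (invmx H) *m map_mx intr g.2 =
           map_mx intr f.2 *m map_mx intr (invmx H) :> 'M[R]_2.
  rewrite -!map_mxM; congr map_mx.
  by apply: (canRL (mulmxK uH)); rewrite -mulmxA -E mulmxA mulVmx ?mul1mx.
have := in_latticeN (in_lattice_mulmx (invmx H) L); congr in_lattice.
rewrite !(mulmxDr, mulmxBr, mulmxN) !mulmxA HH HG mul1mx.
by apply/matrixP => i j; rewrite !mxE; ring.
Qed.

Lemma aff_conj_trans f g l : aff_conj f g -> aff_conj g l -> aff_conj f l.
Proof.
move=> /aff_conjP [h [H [uH E X]]] /aff_conjP [h' [H' [uH' E' X']]]; apply/aff_conjP.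
exists (h' + map_mx intr H' *m h), (H' *m H); split.
- by rewrite unitmx_mul uH' uH.
- by rewrite -mulmxA E !mulmxA E'.
have HG : map_mx intr H' *m map_mx intr g.2 = map_mx intr l.2 *m map_mx intr H' :> 'M[R]_2.
  by rewrite -!map_mxM E'.
have := in_latticeD X' (in_lattice_mulmx H' X); congr in_lattice.
rewrite map_mxM !(mulmxDr, mulmxBr, mulmxN) !mulmxA HG.
by apply/matrixP => i j; rewrite !mxE; ring.
Qed.

Lemma aff_conj_via (P : 'M[int]_2) h k K v G : P \in unitmx -> P *m K = G *m P ->
  in_lattice (h + map_mx intr P *m k - (v + map_mx intr G *m h)) -> aff_conj (k, K) (v, G).
Proof. by move=> uP PK L; apply/aff_conjP; exists h, P. Qed.

Lemma aff_order2_lattice k K : aff_order2 (k, K) -> in_lattice (k + map_mx intr K *m k).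
Proof.
by case=> /same_affinityP [_]; rewrite /aff_pow /= /aff_comp /= mulmx0 addr0 subr0.
Qed.

Lemma aff_order2_conj_lattice k K (P G : 'M[int]_2) : aff_order2 (k, K) -> P *m K = G *m P ->
  in_lattice (map_mx intr P *m k + map_mx intr G *m (map_mx intr P *m k)).
Proof.
move=> /aff_order2_lattice /(in_lattice_mulmx P) L PK.
by rewrite mulmxA -map_mxM -PK map_mxM -mulmxA -mulmxDr.
Qed.

Lemma aff_conj_linear_part k K (G : 'M[int]_2) : gl_conj K G -> \det (1%:M - G) != 0 ->
  aff_conj (k, K) (0, G).
Proof.
move=> /gl_conj_similar [P uP PK] det_ne0.
set U : 'M[R]_2 := map_mx intr (1%:M - G).
have uU : U \in unitmx by rewrite unitmxE det_map_mx unitfE intr_eq0.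
set w := map_mx intr P *m k; set h := - (invmx U *m w).
have Uh : h - map_mx intr G *m h = U *m h by rewrite /U map_mxB map_mx1 mulmxBl mul1mx.
apply: (aff_conj_via (h := h) uP PK).
rewrite add0r addrAC Uh /h mulmxN mulmxA mulmxV // mul1mx addNr; exact: in_lattice0.
Qed.

Lemma translation_same_affinity v w : in_lattice (v - w) -> same_affinity (v, 1%:M) (w, 1%:M).
Proof. by move=> L; apply/same_affinityP. Qed.

Lemma translation_aff_conj (P : 'M[int]_2) v w : P \in unitmx ->
  in_lattice (map_mx intr P *m v - w) -> aff_conj (v, 1%:M) (w, 1%:M).
Proof.
move=> uP L; apply: (aff_conj_via (h := 0) uP); first by rewrite mulmx1 mul1mx.
by rewrite add0r mulmx0 addr0.
Qed.

Lemma order2_translation_classes k : aff_order2 ((k, 1%:M) : affmap R) ->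
  (same_affinity (k, 1%:M) aff_id \/
   same_affinity (k, 1%:M) (2%:R^-1 *: e1, 1%:M) \/
   same_affinity (k, 1%:M) (2%:R^-1 *: e2, 1%:M) \/
   same_affinity (k, 1%:M) (2%:R^-1 *: e1 + 2%:R^-1 *: e2, 1%:M)) /\
  aff_conj (k, 1%:M) (2%:R^-1 *: e1, 1%:M).
Proof.
move=> ord2; have := aff_order2_lattice ord2; case: ord2 => _ not_id.
rewrite map_mx1 mul1mx /e1 /e2 !scalev2 !mulr0 !mulr1 addv2 addr0 add0r.
move: not_id; elim/vec2_ind: k => x y not_id; rewrite addv2.
move=> /in_lattice_vec2 [/int_or_half_int [x_int|x_half] /int_or_half_int [y_int|y_half]].
- by case: not_id; apply: translation_same_affinity; rewrite subr0; apply/in_lattice_vec2.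
- split.
    do 2 right; left; apply: translation_same_affinity.
    by rewrite subv2 subr0; apply/in_lattice_vec2.
  apply: (@translation_aff_conj (mx2 0 1 1 0)); first by rewrite unitmx2.
  by rewrite mulmx2v subv2 !mul0r !mul1r add0r addr0 subr0; apply/in_lattice_vec2.
- split.
    by right; left; apply: translation_same_affinity; rewrite subv2 subr0; apply/in_lattice_vec2.
  apply: (@translation_aff_conj 1%:M); first exact: unitmx1.
  by rewrite map_mx1 mul1mx subv2 subr0; apply/in_lattice_vec2.
- split.
    by do 3 right; apply: translation_same_affinity; rewrite subv2; apply/in_lattice_vec2.
  apply: (@translation_aff_conj (mx2 1 0 (-1) 1)); first by rewrite unitmx2.
  have -> : map_mx intr (mx2 1 0 (-1) 1) *m vec2 x y - vec2 2%:R^-1 0 =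
            vec2 (x - 2%:R^-1) ((y - 2%:R^-1) - (x - 2%:R^-1)).
    by rewrite mulmx2v subv2; congr vec2; ring.
  by apply/in_lattice_vec2; split=> //; apply: rpredB.
Qed.

Lemma aff_conj_matA_classes k K : gl_conj K matA -> aff_order2 ((k, K) : affmap R) ->
  aff_conj (k, K) (0, matA) \/ aff_conj (k, K) (2%:R^-1 *: e2, matA).
Proof.
move=> /gl_conj_similar [P uP PK] ord2; have := aff_order2_conj_lattice ord2 PK.
have via v h := @aff_conj_via P h k K v matA uP PK.
move: via; move: (map_mx intr P *m k) => w; elim/vec2_ind: w => x y via.
set h := vec2 (- (x / 2%:R)) 0.
have shift : h + vec2 x y - map_mx intr matA *m h = vec2 0 y.
  by rewrite /h /matA mulmx2v addv2 subv2; congr vec2; field.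
have {}via v : in_lattice (vec2 0 y - v) -> aff_conj (k, K) (v, matA).
  by move=> L; apply: (via v h); rewrite opprD addrA addrAC shift.
rewrite /matA mulmx2v addv2 !(mul0r, add0r, addr0, mul1r) => /in_lattice_vec2 [_] /int_or_half_int.
case=> [y_int|y_half]; [left|right]; apply: via.
  by rewrite subr0; apply/in_lattice_vec2; rewrite rpred0.
by rewrite /e2 scalev2 mulr0 mulr1 subv2 subr0; apply/in_lattice_vec2; rewrite rpred0.
Qed.

Lemma not_aff_conj_matA_half : ~ aff_conj ((0, matA) : affmap R) (2%:R^-1 *: e2, matA).
Proof.
case/aff_conjP => h [H [_ _]]; rewrite mulmx0 addr0 /e2 scalev2 mulr0 mulr1.
elim/vec2_ind: h => x y; rewrite mulmx2v addv2 subv2 => /in_lattice_vec2 [_].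
by rewrite (_ : _ - _ = - 2%:R^-1); [rewrite rpredN (negPf (half_not_int R)) | ring].
Qed.

Lemma aff_conj_matC k K : gl_conj K matC -> aff_order2 ((k, K) : affmap R) ->
  aff_conj (k, K) (0, matC).
Proof.
move=> /gl_conj_similar [P uP PK] ord2; have := aff_order2_conj_lattice ord2 PK.
have via h := @aff_conj_via P h k K 0 matC uP PK.
move: via; move: (map_mx intr P *m k) => w; elim/vec2_ind: w => x y via.
set h := vec2 (- x) 0.
have shift : h + vec2 x y - map_mx intr matC *m h = vec2 0 (x + y).
  by rewrite /h /matC mulmx2v addv2 subv2; congr vec2; ring.
rewrite /matC mulmx2v addv2 !(mul0r, add0r, mul1r) => /in_lattice_vec2 [xy_int _].
by apply: (via h); rewrite add0r shift; apply/in_lattice_vec2; rewrite rpred0.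
Qed.

End Affinities.

Theorem lemma32 (R : realType) (k : 'cV[R]_2) (K : 'M[int]_2) :
  K \in unitmx ->
  (exists2 n : nat, (0 < n)%N & K ^+ n = 1%:M) ->
  let kappa : affmap R := (k, K) in
  (exists! i : 'I_7, gl_conj K (reps i)) /\
  (* (1) *)
  (K = 1%:M -> aff_order2 kappa ->
     (same_affinity kappa aff_id \/
      same_affinity kappa ((2%:R)^-1 *: e1, 1%:M) \/
      same_affinity kappa ((2%:R)^-1 *: e2, 1%:M) \/
      same_affinity kappa ((2%:R)^-1 *: e1 + (2%:R)^-1 *: e2, 1%:M)) /\
     aff_conj kappa ((2%:R)^-1 *: e1, 1%:M)) /\
  (* (2) *)
  (K = - 1%:M -> aff_conj kappa (0, - 1%:M)) /\
  (* (3) *)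
  (gl_conj K matA -> aff_order2 kappa ->
     let P := aff_conj kappa (0, matA) in
     let Q := aff_conj kappa ((2%:R)^-1 *: e2, matA) in
     (P \/ Q) /\ ~ (P /\ Q)) /\
  (* (4) *)
  (gl_conj K matC -> aff_order2 kappa -> aff_conj kappa (0, matC)) /\
  (* (5) *)
  (gl_conj K ((matB *m matC) *m (matB *m matC)) ->
     aff_conj kappa (0, (matB *m matC) *m (matB *m matC))) /\
  (* (6) *)
  (gl_conj K (matA *m matC) -> aff_conj kappa (0, matA *m matC)) /\
  (* (7) *)
  (gl_conj K (matB *m matC) -> aff_conj kappa (0, matB *m matC)).
Proof.
move=> uK finK kappa; rewrite /kappa.
have linear_part_conj G : 1 - \tr G + \det G != 0 -> gl_conj K G -> aff_conj (k, K) (0, G).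
  by move=> G1 KG; apply: aff_conj_linear_part; rewrite ?det_1_sub_mx2.
split; first exact: finite_order_unique_rep.
split; first by move=> ->; apply: order2_translation_classes.
split.
  move=> K1; apply: linear_part_conj; last by rewrite K1; exact/gl_conj_similar/unit_similar_refl.
  by rewrite mx2_1 oppmx2 trace_mx2 det_mx2.
split.
  move=> KA ord2; split; first exact: aff_conj_matA_classes.
  by case=> /aff_conj_sym AP AQ; apply: not_aff_conj_matA_half; apply: aff_conj_trans AP AQ.
split; first exact: aff_conj_matC.
split; first by apply: linear_part_conj; rewrite matBC2_mx2 trace_mx2 det_mx2.
split; first by apply: linear_part_conj; rewrite matAC_mx2 trace_mx2 det_mx2.
by apply: linear_part_conj; rewrite matBC_mx2 trace_mx2 det_mx2.
Qed.
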